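(* Let $N$ be a finite set with $|N|\ge 2$, let $o\in\mathbb{R}^{\Upsilon}$ be an SE objective and let $m\in\mathbb{R}^{\mathcal{S}}$ satisfy $o(a|B)=m(\{a\}\cup B)-m(B)$ for all $a\in N$, $B\subseteq N\setminus\{a\}$. Then for every $T\in\mathcal{S}$ and every $b\in T$, with $R=T\setminus\{b\}$, $$\sum_{\emptyset\neq K\subseteq R}(-1)^{|R\setminus K|}\, o(b|K)=\sum_{L\in\mathcal{S}:\,L\subseteq T}(-1)^{|T\setminus L|}\, m(L).$$ In particular, the left-hand side does not depend on the choice of $b\in T$.
   Context: $\mathrm{DAG}(N)$ is the set of acyclic directed graphs over $N$; $\mathrm{pa}_G(a)$ is the parent set of $a$ in $G$; $G\sim H$ (Markov equivalence) means same adjacencies and same immoralities. $\Upsilon=\{(a|B): a\in N,\ \emptyset\neq B\subseteq N\setminus\{a\}\}$; $\eta_G\in\mathbb{R}^{\Upsilon}$ has $\eta_G(a|B)=1$ if $B=\mathrm{pa}_G(a)$, else $0$. $o\in\mathbb{R}^{\Upsilon}$ is an SE objective if $\langle o,\eta_G\rangle=\langle o,\eta_H\rangle$ whenever $G\sim H$. $\mathcal{S}=\{S\subseteq N:|S|\ge 2\}$. Conventions: $o(b|\emptyset)=0$ for all $b\in N$, and $m(S)=0$ for $|S|\le 1$. *)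

From mathcomp Require Import all_boot all_order all_algebra.
Set Implicit Arguments. Unset Strict Implicit. Unset Printing Implicit Defensive.
Import Order.TTheory GRing.Theory Num.Theory.
Local Open Scope ring_scope.

(* A directed graph over the finite node set N is given by its parent map:
   pa a = set of parents of a (edge x -> a iff x \in pa a). *)
Definition digraph (N : finType) := N -> {set N}.

Definition edge (N : finType) (G : digraph N) : rel N := fun x y => x \in G y.

(* acyclic: no directed path from y back to x when x -> y (excludes loops too,
   since connect is reflexive). *)
Definition is_dag (N : finType) (G : digraph N) : bool :=
  [forall x, forall y, (x \in G y) ==> ~~ connect (edge G) y x].

Definition adjacent (N : finType) (G : digraph N) (x y : N) : bool :=
  (x \in G y) || (y \in G x).

Definition immorality (N : finType) (G : digraph N) (a c b : N) : bool :=
  [&& a \in G c, b \in G c, a != b & ~~ adjacent G a b].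

Definition markov_equiv (N : finType) (G H : digraph N) : Prop :=
  (forall x y, adjacent G x y = adjacent H x y) /\
  (forall a c b, immorality G a c b = immorality H a c b).

(* o : R^Upsilon, represented as a function of (a, B); only its values on
   nonempty B with a \notin B matter.  Convention o(b|emptyset) = 0. *)
Definition oE (R : nzRingType) (N : finType) (o : N -> {set N} -> R) (a : N) (B : {set N}) : R :=
  if B == set0 then 0 else o a B.

(* m : R^S, represented on all subsets; convention m(S) = 0 for |S| <= 1. *)
Definition mE (R : nzRingType) (N : finType) (m : {set N} -> R) (S : {set N}) : R :=
  if (#|S| <= 1)%N then 0 else m S.

(* <o, eta_G> = sum over a of o(a | pa_G(a)), with the zero convention for
   empty parent sets (eta_G has no coordinate there). *)
Definition score (R : nzRingType) (N : finType) (o : N -> {set N} -> R) (G : digraph N) : R :=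
  \sum_(a : N) oE o a (G a).

Definition SE_objective (R : nzRingType) (N : finType) (o : N -> {set N} -> R) : Prop :=
  forall G H : digraph N, is_dag G -> is_dag H -> markov_equiv G H ->
    score o G = score o H.

Definition lhs (R : nzRingType) (N : finType) (o : N -> {set N} -> R) (T : {set N}) (b : N) : R :=
  \sum_(K : {set N} | (K != set0) && (K \subset T :\ b))
     (-1) ^+ #|(T :\ b) :\: K| * o b K.

From mathcomp Require Import all_boot all_order all_algebra.
Set Implicit Arguments. Unset Strict Implicit. Unset Printing Implicit Defensive.
Import Order.TTheory GRing.Theory Num.Theory.
Local Open Scope ring_scope.

(* Both sides are the alternating sum of [m] over the subsets of [T]: splitting
   the subsets of [T] according to whether they contain [b] pairs [b |: K] with
   [K], and the difference [m (b |: K) - m K] is [o b K] by hypothesis. *)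

Section AlternatingSubsetSum.

Variables (R : nzRingType) (N : finType).

Definition alt_subset_sum (f : {set N} -> R) (T : {set N}) : R :=
  \sum_(L : {set N} | L \subset T) (-1) ^+ #|T :\: L| * f L.

Lemma alt_subset_sum_setD1 (f : {set N} -> R) (T : {set N}) (b : N) :
  b \in T ->
  alt_subset_sum f T =
    \sum_(K : {set N} | K \subset T :\ b)
       (-1) ^+ #|(T :\ b) :\: K| * (f (b |: K) - f K).
Proof.
move=> bT; rewrite /alt_subset_sum (bigID (fun L : {set N} => b \in L)) /=.
have -> : \sum_(L : {set N} | (L \subset T) && (b \in L)) (-1) ^+ #|T :\: L| * f L
    = \sum_(K : {set N} | K \subset T :\ b) (-1) ^+ #|(T :\ b) :\: K| * f (b |: K).
  rewrite (reindex_onto (fun K => b |: K) (fun L => L :\ b)) /=; last first.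
    by move=> L /andP[_ bL]; rewrite setD1K.
  apply: eq_big => [K|K _]; last by rewrite setDDl.
  rewrite subsetD1 subUset sub1set bT /= setU11 andbT.
  case bK: (b \in K) => /=; last by rewrite setU1K ?bK ?eqxx ?andbT.
  rewrite andbF; apply/negP => /andP[_ /eqP eK].
  by move: bK; rewrite -eK !inE eqxx.
have -> : \sum_(L : {set N} | (L \subset T) && (b \notin L)) (-1) ^+ #|T :\: L| * f L
    = - \sum_(K : {set N} | K \subset T :\ b) (-1) ^+ #|(T :\ b) :\: K| * f K.
  rewrite -sumrN; apply: eq_big => [K|K /andP[KT bK]]; first by rewrite subsetD1.
  rewrite (cardsD1 b (T :\: K)) !inE bK bT /= setDDl setUC -setDDl exprS.
  by rewrite mulN1r mulNr.
by rewrite -sumrB; apply: eq_bigr => K _; rewrite mulrBr.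
Qed.

Lemma alt_subset_sum_mE (m : {set N} -> R) (T : {set N}) :
  alt_subset_sum (mE m) T =
    \sum_(L : {set N} | (2 <= #|L|)%N && (L \subset T)) (-1) ^+ #|T :\: L| * m L.
Proof.
rewrite /alt_subset_sum big_mkcond [RHS]big_mkcond; apply: eq_bigr => L _.
rewrite /mE; case: (L \subset T); rewrite ?andbF ?andbT //.
by case: leqP => _; rewrite ?mulr0.
Qed.

Lemma lhs_alt_subset_sum (o : N -> {set N} -> R) (m : {set N} -> R)
    (T : {set N}) (b : N) :
  (forall (a : N) (B : {set N}), B \subset ~: [set a] ->
     oE o a B = mE m (a |: B) - mE m B) ->
  b \in T -> lhs o T b = alt_subset_sum (mE m) T.
Proof.
move=> hm bT; rewrite (alt_subset_sum_setD1 _ bT) /lhs big_mkcond [RHS]big_mkcond.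
apply: eq_bigr => K _; case KTb: (K \subset T :\ b); last by rewrite andbF.
rewrite andbT -hm; last first.
  by rewrite subsetC sub1set inE; apply/negP => /(subsetP KTb); rewrite !inE eqxx.
by rewrite /oE; case: eqP; rewrite ?mulr0.
Qed.

End AlternatingSubsetSum.

Theorem corollary3 (R : realFieldType) (N : finType) (hN : (2 <= #|N|)%N)
  (o : N -> {set N} -> R) (m : {set N} -> R)
  (hSE : SE_objective o)
  (hm : forall (a : N) (B : {set N}), B \subset ~: [set a] ->
          oE o a B = mE m (a |: B) - mE m B) :
  forall (T : {set N}), (2 <= #|T|)%N -> forall b, b \in T ->
    lhs o T b =
      \sum_(L : {set N} | (2 <= #|L|)%N && (L \subset T))
         (-1) ^+ #|T :\: L| * m L
    /\ (forall b', b' \in T -> lhs o T b = lhs o T b').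
Proof.
move=> T _ b bT; rewrite (lhs_alt_subset_sum hm bT) alt_subset_sum_mE.
split=> // b' b'T.
by rewrite (lhs_alt_subset_sum hm b'T) alt_subset_sum_mE.
Qed.
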